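(* Let $p,q$ be probability distributions on $\{1,\dots,n\}$ and let $\mathbf p(i,j)$ be a minimum-entropy coupling of $p$ and $q$. Consider the weighted undirected bipartite graph $G$ with vertex set $\{\ell_1,\dots,\ell_n,r_1,\dots,r_n\}$ and edge set $\{(\ell_i,r_j)$ with weight $\mathbf p(i,j) : \mathbf p(i,j)>0\}$. Then $G$ is a forest, and every edge of maximum weight has a leaf of this forest as one of its endpoints.
   Context: A coupling of $p$ and $q$ is a joint distribution $\mathbf p(i,j)\ge 0$ on $\{1,\dots,n\}^2$ with $\sum_j\mathbf p(i,j)=p(i)$ and $\sum_i \mathbf p(i,j)=q(j)$; a minimum-entropy coupling minimizes $\sum_{i,j}\mathbf p(i,j)\log_2(1/\mathbf p(i,j))$. *)

From HB Require Import structures.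
From mathcomp Require Import all_boot all_order all_algebra.
From mathcomp Require Import all_classical all_reals all_analysis.
Set Implicit Arguments. Unset Strict Implicit. Unset Printing Implicit Defensive.
Import Order.TTheory GRing.Theory Num.Theory.
Local Open Scope ring_scope.

(* probability distribution on {1..n} = 'I_n *)
Definition is_distr (R : realType) (n : nat) (p : 'I_n -> R) : Prop :=
  (forall i, 0 <= p i) /\ \sum_(i < n) p i = 1.

Definition is_coupling (R : realType) (n : nat) (p q : 'I_n -> R)
  (P : 'I_n -> 'I_n -> R) : Prop :=
  (forall i j, 0 <= P i j) /\
  (forall i, \sum_(j < n) P i j = p i) /\
  (forall j, \sum_(i < n) P i j = q j).

(* x log_2 (1/x), with the convention 0 log(1/0) = 0 *)
Definition ent_term (R : realType) (x : R) : R :=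
  if x == 0 then 0 else x * (ln (x^-1) / ln 2).

Definition entropy2 (R : realType) (n : nat) (P : 'I_n -> 'I_n -> R) : R :=
  \sum_(i < n) \sum_(j < n) ent_term (P i j).

Definition is_min_entropy_coupling (R : realType) (n : nat) (p q : 'I_n -> R)
  (P : 'I_n -> 'I_n -> R) : Prop :=
  is_coupling p q P /\
  forall Q, is_coupling p q Q -> entropy2 P <= entropy2 Q.

(* bipartite support graph: vertices inl i = l_i, inr j = r_j *)
Definition coupling_graph (R : realType) (n : nat) (P : 'I_n -> 'I_n -> R)
  : rel ('I_n + 'I_n) :=
  fun u v => match u, v with
             | inl i, inr j => 0 < P i j
             | inr j, inl i => 0 < P i j
             | _, _ => false
             end.

Definition is_forest (T : finType) (e : rel T) : Prop :=
  forall s : seq T, (3 <= size s)%N -> ~~ ucycleb e s.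

Definition is_leaf (T : finType) (e : rel T) (x : T) : Prop :=
  #|[set y | e x y]| = 1%N.

(* Minimising the entropy of a coupling P means maximising the sum of
   F (P i j) with F x = x ln x over the transportation polytope of p and q, and
   adding a matrix with zero row and column sums keeps the marginals.
   A cycle in the support graph alternates between left and right vertices,
   so the +1/-1 matrix D alternating along it has zero row and column sums and
   is supported by P; by strict convexity of F one of P + eps D and P - eps D
   would have larger objective. Hence P is a vertex and its support a forest.
   If a maximal entry P i j had further positive entries P i k and P m j,
   moving delta = min (P i k) (P m j) from them onto P i j and P m k would also
   increase the objective: F is superadditive, and moving mass from an entry c
   to an entry a >= c increases F a + F c. Hence l_i or r_j is a leaf. *)

From HB Require Import structures.
From mathcomp Require Import all_boot all_order all_algebra.
From mathcomp Require Import all_classical all_reals all_analysis.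
From mathcomp Require Import ring lra.
Import Order.TTheory GRing.Theory Num.Theory.
Set Implicit Arguments. Unset Strict Implicit.
Local Open Scope ring_scope.

Section XLnX.
Variable R : realType.
Implicit Types x y a b c d t : R.

Definition xlnx x : R := x * ln x.

Lemma xlnx0 : xlnx 0 = 0.
Proof. by rewrite /xlnx mul0r. Qed.

Lemma ln_lt_subr1 x : 0 < x -> x != 1 -> ln x < x - 1.
Proof.
move=> x0 x1; have lnx0 : ln x != 0 by rewrite ln_eq0.
by have := expR_gt1Dx lnx0; rewrite lnK ?posrE //; lra.
Qed.

Lemma xlnx_tangent_lt x y : 0 < y -> 0 <= x -> x != y ->
  xlnx y + (ln y + 1) * (x - y) < xlnx x.
Proof.
move=> y0 x0 xy; rewrite /xlnx.
have [->|xn0] := eqVneq x 0; first by rewrite (ln0 (lexx 0)) mulr0; lra.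
have xpos : 0 < x by rewrite lt_neqAle eq_sym xn0.
have yx1 : y / x != 1 by rewrite -(inj_eq (mulIf xn0)) divfK // mul1r eq_sym.
have := ln_lt_subr1 (divr_gt0 y0 xpos) yx1.
rewrite ln_div ?posrE // -(ltr_pM2l xpos) !mulrBr mulrCA divff // mulr1.
by move=> h; rewrite mulrDl; lra.
Qed.

Lemma xlnx_tangent_le x y : 0 < y -> 0 <= x ->
  xlnx y + (ln y + 1) * (x - y) <= xlnx x.
Proof.
move=> y0 x0; have [->|xy] := eqVneq x y; first by rewrite subrr mulr0 addr0.
exact/ltW/xlnx_tangent_lt.
Qed.

Lemma xlnx_superadditive x y : 0 <= x -> 0 <= y -> xlnx x + xlnx y <= xlnx (x + y).
Proof.
rewrite le0r => /predU1P[-> _|x0]; first by rewrite xlnx0 !add0r.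
rewrite le0r => /predU1P[->|y0]; first by rewrite xlnx0 !addr0.
by rewrite /xlnx mulrDl; apply: lerD; rewrite ler_pM2l // ler_ln ?posrE ?addr_gt0 //; lra.
Qed.

Lemma xlnx_spread_lt a b c : 0 < b -> b <= c -> c <= a ->
  xlnx a + xlnx c < xlnx (a + b) + xlnx (c - b).
Proof.
move=> b0 bc ca; have c0 : 0 < c by apply: lt_le_trans bc.
have a0 : 0 < a by apply: lt_le_trans ca.
have tan_a := xlnx_tangent_le (a0 : 0 < a) (ltW (addr_gt0 a0 b0)).
have tan_c : xlnx c + (ln c + 1) * (c - b - c) < xlnx (c - b).
  by apply: xlnx_tangent_lt; rewrite ?subr_ge0 // -subr_eq0 addrAC subrr add0r oppr_eq0 gt_eqF.
have : ln c <= ln a by rewrite ler_ln ?posrE.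
by nra.
Qed.

Lemma xlnx_midpoint_lt x t : `|t| <= x -> t != 0 ->
  2 * xlnx x < xlnx (x + t) + xlnx (x - t).
Proof.
move=> tx t0; have x0 : 0 < x by apply: lt_le_trans tx; rewrite normr_gt0.
have := tx; rewrite ler_norml => /andP[xt tx'].
have tan_p : xlnx x + (ln x + 1) * (x + t - x) < xlnx (x + t).
  by apply: xlnx_tangent_lt => //; [lra | rewrite -subr_eq0 addrAC subrr add0r].
have tan_m : xlnx x + (ln x + 1) * (x - t - x) < xlnx (x - t).
  by apply: xlnx_tangent_lt => //; [lra | rewrite -subr_eq0 addrAC subrr add0r oppr_eq0].
lra.
Qed.

Lemma xlnx_midpoint_le x t : `|t| <= x ->
  2 * xlnx x <= xlnx (x + t) + xlnx (x - t).
Proof.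
have [-> _|t0 tx] := eqVneq t 0; first by rewrite addr0 subr0 mulr2n mulrDl mul1r.
exact/ltW/xlnx_midpoint_lt.
Qed.

Lemma xlnx_transfer_lt a b c d : 0 < b -> 0 < c -> b <= a -> c <= a -> 0 <= d ->
  let m := Num.min b c in
  xlnx a + xlnx b + xlnx c + xlnx d <
  xlnx (a + m) + xlnx (b - m) + xlnx (c - m) + xlnx (d + m).
Proof.
wlog bc : b c / b <= c => [hwlog|] b0 c0 ba ca d0 /=.
  have /orP[bc|cb] := le_total b c; first exact: hwlog bc b0 c0 ba ca d0.
  by rewrite minC; have := hwlog c b cb c0 b0 ca ba d0 => /=; lra.
rewrite (min_idPl bc) subrr xlnx0.
have := xlnx_spread_lt b0 bc ca; have := xlnx_superadditive d0 (ltW b0); lra.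
Qed.

Lemma ent_termE x : 0 <= x -> ent_term x = - xlnx x / ln 2.
Proof.
rewrite le0r /ent_term /xlnx => /predU1P[->|x0]; first by rewrite eqxx mul0r oppr0 mul0r.
by rewrite (gt_eqF x0) lnV ?posrE // mulrA mulrN mulNr.
Qed.

End XLnX.

Lemma sum_support2 (T : finType) (V : nmodType) (a b : T) (g : T -> V) :
  a != b -> (forall x, x != a -> x != b -> g x = 0) -> \sum_x g x = g a + g b.
Proof.
move=> ab g0; rewrite (bigD1 a) // (bigD1 b) 1?eq_sym //= big1 ?addr0 // => x /andP[xa xb].
exact: g0.
Qed.

Lemma big_next (T : eqType) (V : nmodType) (s : seq T) (F : T -> V) :
  uniq s -> \sum_(u <- s) F (next s u) = \sum_(u <- s) F u.
Proof.
move=> us; rewrite -(big_map (next s) xpredT); apply: perm_big; apply: uniq_perm => //.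
  by rewrite map_inj_uniq //; apply: can_inj (prev_next us).
move=> y; apply/mapP/idP => [[x xs ->]|ys]; first by rewrite mem_next.
by exists (prev s y); rewrite ?mem_prev ?next_prev.
Qed.

Lemma sum_eq_and (T : finType) (V : pzSemiRingType) (a : T) (c : bool) :
  \sum_x (((a == x) && c)%:R : V) = c%:R.
Proof.
case: c; last by rewrite big1 // => x _; rewrite andbF.
rewrite (bigD1 a) //= eqxx big1 ?addr0 // => x xa.
by rewrite andbT eq_sym (negbTE xa).
Qed.

Lemma card_neq1_other (T : finType) (A : {set T}) x :
  x \in A -> #|A| != 1%N -> exists2 y, y \in A & y != x.
Proof.
move=> xA A1; have : (0 < #|A :\ x|)%N.
  by move: A1; rewrite (cardsD1 x A) xA add1n lt0n; apply: contra => /eqP ->.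
by case/card_gt0P => y; rewrite !inE => /andP[yx yA]; exists y.
Qed.

Lemma exists_small_multiple (R : realFieldType) (T : finType) (f g : T -> R) :
  (forall x, 0 <= g x) -> (forall x, f x != 0 -> 0 < g x) ->
  exists2 eps, 0 < eps & forall x, `|eps * f x| <= g x.
Proof.
move=> g0 fg; pose ratio x := if f x == 0 then 1 else g x / `|f x|.
have ratio0 x : 0 < ratio x.
  by rewrite /ratio; case: eqP => [//|/eqP fx0]; rewrite divr_gt0 ?normr_gt0 ?fg.
exists (\big[Num.min/1]_x ratio x) => [|x]; first exact: lt_bigmin.
have [-> | fx0] := eqVneq (f x) 0; first by rewrite mulr0 normr0.
rewrite normrM ger0_norm; last exact/ltW/lt_bigmin.
rewrite -ler_pdivlMr ?normr_gt0 //; apply: le_trans (bigmin_le 1 x ratio) _.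
by rewrite /ratio (negbTE fx0).
Qed.

Section Couplings.
Variables (R : realType) (n : nat).
Implicit Types (p q : 'I_n -> R) (Q D : 'I_n -> 'I_n -> R).

Definition sum_xlnx Q := \sum_(i < n) \sum_(j < n) xlnx (Q i j).

Lemma entropy2E Q : (forall i j, 0 <= Q i j) -> entropy2 Q = - sum_xlnx Q / ln 2.
Proof.
move=> Q0; rewrite /entropy2 /sum_xlnx mulNr mulr_suml -sumrN; apply: eq_bigr => i _.
by rewrite mulr_suml -sumrN; apply: eq_bigr => j _; rewrite ent_termE // mulNr.
Qed.

Definition balanced D :=
  (forall i, \sum_(j < n) D i j = 0) /\ (forall j, \sum_(i < n) D i j = 0).

Lemma balancedZ t D : balanced D -> balanced (fun i j => t * D i j).
Proof. by move=> [Dr Dc]; split=> k; rewrite -mulr_sumr ?Dr ?Dc mulr0. Qed.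

Lemma balancedN D : balanced D -> balanced (fun i j => - D i j).
Proof. by move=> [Dr Dc]; split=> k; rewrite sumrN ?Dr ?Dc oppr0. Qed.

Lemma balanced_tensor (u v : 'I_n -> R) :
  \sum_i u i = 0 -> \sum_j v j = 0 -> balanced (fun i j => u i * v j).
Proof. by move=> u0 v0; split=> k; rewrite -?mulr_sumr -?mulr_suml ?u0 ?v0 ?mulr0 ?mul0r. Qed.

Lemma coupling_add p q Q D : is_coupling p q Q -> balanced D ->
  (forall i j, 0 <= Q i j + D i j) -> is_coupling p q (fun i j => Q i j + D i j).
Proof.
by move=> [_ [Qr Qc]] [Dr Dc] ge0; split=> //; split=> k; rewrite big_split /= ?Qr ?Dr ?Qc ?Dc addr0.
Qed.

Lemma sum_xlnx_midpoint_lt Q D i0 j0 :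
  (forall i j, `|D i j| <= Q i j) -> D i0 j0 != 0 ->
  2 * sum_xlnx Q <
    sum_xlnx (fun i j => Q i j + D i j) + sum_xlnx (fun i j => Q i j - D i j).
Proof.
move=> DQ D0; rewrite /sum_xlnx !pair_big mulr_sumr -big_split /=.
rewrite (bigD1 (i0, j0)) //= [X in _ < X](bigD1 (i0, j0)) //=.
by apply: ltr_leD; [exact: xlnx_midpoint_lt | apply: ler_sum => x _; exact: xlnx_midpoint_le].
Qed.

Definition unit_diff (a b x : 'I_n) : R := (x == a)%:R - (x == b)%:R.

Lemma unit_diffE a b x : a != b ->
  unit_diff a b x = if x == a then 1 else if x == b then -1 else 0.
Proof.
move=> ab; rewrite /unit_diff; have [-> | _] := eqVneq x a; first by rewrite (negbTE ab) subr0.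
by case: (x == b); rewrite /= ?subrr ?sub0r.
Qed.

Lemma sum_unit_diff a b : \sum_x unit_diff a b x = 0.
Proof.
have sum1 c : \sum_x ((x == c)%:R : R) = 1.
  by rewrite (bigD1 c) //= eqxx big1 ?addr0 // => x /negbTE ->.
by rewrite sumrB !sum1 subrr.
Qed.

Section MinEntropyCoupling.
Variables (p q : 'I_n -> R) (P : 'I_n -> 'I_n -> R).
Hypothesis Pmin : is_min_entropy_coupling p q P.

Lemma min_entropy_coupling_ge0 i j : 0 <= P i j.
Proof. by case: Pmin => [[]]. Qed.

Lemma sum_xlnx_perturb_le D : balanced D -> (forall i j, 0 <= P i j + D i j) ->
  sum_xlnx (fun i j => P i j + D i j) <= sum_xlnx P.
Proof.
move=> bD ge0; case: Pmin => cP /(_ _ (coupling_add cP bD ge0)).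
have ln2 : 0 < ln (2 : R) by rewrite ln_gt0 // ltr1n.
rewrite (entropy2E ge0) (entropy2E min_entropy_coupling_ge0).
by rewrite ler_pM2r ?invr_gt0 // lerN2.
Qed.

Lemma balanced_supported_eq0 D : balanced D -> (forall i j, D i j != 0 -> 0 < P i j) ->
  forall i j, D i j = 0.
Proof.
move=> bD supp i0 j0; apply/eqP; apply: contraT => D0.
have [eps eps0 small] := exists_small_multiple (f := fun x : 'I_n * 'I_n => D x.1 x.2)
  (fun x => min_entropy_coupling_ge0 x.1 x.2) (fun x => supp x.1 x.2).
have bounds i j : - P i j <= eps * D i j <= P i j.
  by rewrite -ler_norml; exact: small (i, j).
have plus : sum_xlnx (fun i j => P i j + eps * D i j) <= sum_xlnx P.
  apply: sum_xlnx_perturb_le (balancedZ eps bD) _ => i j.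
  by case/andP: (bounds i j); lra.
have minus : sum_xlnx (fun i j => P i j - eps * D i j) <= sum_xlnx P.
  apply: sum_xlnx_perturb_le (balancedN (balancedZ eps bD)) _ => i j.
  by case/andP: (bounds i j); lra.
have := sum_xlnx_midpoint_lt (fun i j => small (i, j)) (mulf_neq0 (lt0r_neq0 eps0) D0).
lra.
Qed.

Lemma max_entry_row_col_contra i j k m : k != j -> m != i ->
  0 < P i k -> 0 < P m j -> (forall i' j', P i' j' <= P i j) -> False.
Proof.
move=> kj mi Pik Pmj Pmax.
have jk : j != k by rewrite eq_sym.
have im : i != m by rewrite eq_sym.
pose delta := Num.min (P i k) (P m j).
have delta0 : 0 < delta by rewrite lt_min Pik Pmj.
have [delta_ik delta_mj] : delta <= P i k /\ delta <= P m j by rewrite !ge_min !lexx orbT.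
have ge0 i' j' : 0 <= P i' j' + delta * (unit_diff i m i' * unit_diff j k j').
  move: (min_entropy_coupling_ge0 i' j'); rewrite !unit_diffE //.
  by repeat case: ifPn => [/eqP-> | _]; lra.
have bS := balancedZ delta (balanced_tensor (sum_unit_diff i m) (sum_unit_diff j k)).
have := sum_xlnx_perturb_le bS ge0.
rewrite -subr_ge0 /sum_xlnx -sumrB (sum_support2 im) => [|i' i'i i'm]; last first.
  rewrite -sumrB big1 // => j' _.
  by rewrite !unit_diffE // (negbTE i'i) (negbTE i'm) mul0r mulr0 addr0 subrr.
rewrite -!sumrB !(sum_support2 jk) => [|j' j'j j'k|j' j'j j'k]; first last.
- by rewrite !unit_diffE // (negbTE j'j) (negbTE j'k) !mulr0 addr0 subrr.
- by rewrite !unit_diffE // (negbTE j'j) (negbTE j'k) !mulr0 addr0 subrr.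
rewrite !unit_diffE // !eqxx (negbTE kj) (negbTE mi) !(mulr1, mul1r, mulN1r, mulrN1, opprK).
have := xlnx_transfer_lt Pik Pmj (Pmax i k) (Pmax m j) (min_entropy_coupling_ge0 m k).
rewrite /= -/delta; lra.
Qed.

End MinEntropyCoupling.
End Couplings.

Section SupportGraph.
Variables (R : realType) (n : nat) (P : 'I_n -> 'I_n -> R).
Local Notation G := (coupling_graph P).
Implicit Types (u v : 'I_n + 'I_n) (s : seq ('I_n + 'I_n)).

(* Entry (i, j) of the signed incidence matrix of the oriented edge u -> v:
   +1 for l_i -> r_j and -1 for r_j -> l_i. *)
Definition arc u v (i j : 'I_n) : R :=
  match u, v with
  | inl a, inr b => ((a == i) && (b == j))%:R
  | inr b, inl a => - ((a == i) && (b == j))%:R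
  | _, _ => 0
  end.

Definition circulation s i j := \sum_(u <- s) arc u (next s u) i j.

Lemma arc_neq0 u v i j : arc u v i j != 0 ->
  (u, v) = (inl i, inr j) \/ (u, v) = (inr j, inl i).
Proof.
case: u => a; case: v => b; rewrite /= ?eqxx ?oppr_eq0 //.
- by case: (a =P i) => [->|_]; case: (b =P j) => [->|_]; rewrite /= ?eqxx //; left.
- by case: (b =P i) => [->|_]; case: (a =P j) => [->|_]; rewrite /= ?eqxx //; right.
Qed.

Lemma arc_row_sum u v i : G u v ->
  \sum_j arc u v i j = (u == inl i)%:R - (v == inl i)%:R.
Proof.
case: u => a; case: v => b //= _; rewrite -!sum_eqE /= ?sumrN.
  by under eq_bigr do rewrite andbC; rewrite sum_eq_and subr0.
by under eq_bigr do rewrite andbC; rewrite sum_eq_and sub0r.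
Qed.

Lemma arc_col_sum u v j : G u v ->
  \sum_i arc u v i j = (v == inr j)%:R - (u == inr j)%:R.
Proof.
case: u => a; case: v => b //= _; rewrite -!sum_eqE /= ?sumrN.
  by rewrite sum_eq_and subr0.
by rewrite sum_eq_and sub0r.
Qed.

Lemma circulation_balanced s : cycle G s -> uniq s -> balanced (circulation s).
Proof.
move=> cyc us; split=> k; rewrite exchange_big /=.
  under eq_big_seq => u u_s do rewrite arc_row_sum ?(next_cycle cyc u_s) //.
  by rewrite sumrB (big_next (fun x => (x == inl k)%:R)) ?subrr.
under eq_big_seq => u u_s do rewrite arc_col_sum ?(next_cycle cyc u_s) //.
by rewrite sumrB (big_next (fun x => (x == inr k)%:R)) ?subrr.
Qed.

Lemma circulation_supported s : cycle G s ->
  forall i j, circulation s i j != 0 -> 0 < P i j.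
Proof.
move=> cyc i j; apply: contraNT => Pij; rewrite /circulation big1_seq // => u /andP[_ u_s].
have [//|/arc_neq0[[Eu En]|[Eu En]]] := eqVneq (arc u (next s u) i j) 0;
  by move: (next_cycle cyc u_s); rewrite En Eu /= (negbTE Pij).
Qed.

Lemma circulation_neq0 s : (3 <= size s)%N -> uniq s -> cycle G s ->
  exists i j, circulation s i j != 0.
Proof.
case: s => [|x0 [|x1 [|x2 r]]] // _ us cyc.
have e01 : G x0 x1 by case/andP: cyc.
have [x10 x20] : x1 != x0 /\ x2 != x0.
  by move: us; rewrite /= !inE !negb_or => /andP[/and3P[? ? _] _]; split; rewrite eq_sym.
have [i [j E01]] : exists i j, (x0, x1) = (inl i, inr j) \/ (x0, x1) = (inr j, inl i).
  move: e01; case: x0 {us cyc x10 x20} => a; case: x1 => b // _.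
    by exists a, b; left.
  by exists b, a; right.
have arc_on01 u v : arc u v i j != 0 -> (u, v) = (x0, x1) \/ (u, v) = (x1, x0).
  by move/arc_neq0; case: E01 => [[-> ->] | [-> ->]]; tauto.
exists i, j; rewrite /circulation (bigD1_seq x0) ?mem_head //= eqxx big1_seq ?addr0.
  by case: E01 => [[-> ->] | [-> ->]]; rewrite /= !eqxx ?oppr_eq0 oner_neq0.
move=> u /andP[ux0 _].
have [//|/arc_on01[[Eu _]|[Eu En]]] := eqVneq (arc u (next [:: x0, x1, x2 & r] u) i j) 0.
  by rewrite Eu eqxx in ux0.
by move: En; rewrite Eu /= (negbTE x10) eqxx => /eqP; rewrite (negbTE x20).
Qed.

End SupportGraph.

Theorem lemma2 (R : realType) (n : nat) (p q : 'I_n -> R)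
  (P : 'I_n -> 'I_n -> R) :
  is_distr p -> is_distr q ->
  is_min_entropy_coupling p q P ->
  is_forest (coupling_graph P) /\
  (forall i j, 0 < P i j ->
     (forall i' j', P i' j' <= P i j) ->
     is_leaf (coupling_graph P) (inl i) \/ is_leaf (coupling_graph P) (inr j)).
Proof.
move=> _ _ Pmin; split.
  move=> s s3; apply/negP => /andP[cyc us].
  have [i [j]] := circulation_neq0 s3 us cyc.
  have bC := circulation_balanced cyc us.
  by rewrite (balanced_supported_eq0 Pmin bC (circulation_supported cyc)) eqxx.
move=> i j Pij Pmax; rewrite /is_leaf.
have [|not_leaf_l] := eqVneq #|[set y | coupling_graph P (inl i) y]| 1%N; first by left.
have [|not_leaf_r] := eqVneq #|[set y | coupling_graph P (inr j) y]| 1%N; first by right.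
have [[?|k] ik kj] : exists2 y, y \in [set y | coupling_graph P (inl i) y] & y != inr j.
- by apply: card_neq1_other not_leaf_l; rewrite inE.
- by rewrite inE in ik.
have [[m|?] mj mi] : exists2 y, y \in [set y | coupling_graph P (inr j) y] & y != inl i.
- by apply: card_neq1_other not_leaf_r; rewrite inE.
- move: ik mj; rewrite !inE => ik mj.
  by case: (max_entry_row_col_contra Pmin kj mi ik mj Pmax).
by rewrite inE in mj.
Qed.
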